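(* For each $\eta\in(0,\pi/3)$, the convex hull $\mathrm{co}(V)$ is a polygon, where $V=\{b_0\}\cup\{z_k:k\ge0\}\cup\{w_k:k\ge1\}$.
   Context: For $\eta\in(0,\pi/3)$ let $a=\frac{e^{-i\eta}}{2\cos\eta}$, $c=\frac{1}{1-|a|^4}$, and for integers $k\ge0$ put $z_k=ca^{k+1}$, $w_k=1-c|a|^2a^k$, $b_k=a+c|a|^4a^k$. *)

From Stdlib Require Import Reals List.
From Coquelicot Require Import Coquelicot.
Open Scope R_scope.

Definition a_ (eta : R) : C := Cdiv (cos eta, - sin eta) (RtoC (2 * cos eta)).
Definition c_ (eta : R) : R := 1 / (1 - Cmod (a_ eta) ^ 4).
Definition z_ (eta : R) (k : nat) : C := (RtoC (c_ eta) * Cpow (a_ eta) (S k))%C.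
Definition w_ (eta : R) (k : nat) : C :=
  (RtoC 1 - RtoC (c_ eta * Cmod (a_ eta) ^ 2) * Cpow (a_ eta) k)%C.
Definition b_ (eta : R) (k : nat) : C :=
  (a_ eta + RtoC (c_ eta * Cmod (a_ eta) ^ 4) * Cpow (a_ eta) k)%C.

Definition Vset (eta : R) (p : C) : Prop :=
  p = b_ eta 0 \/ (exists k : nat, p = z_ eta k) \/
  (exists k : nat, (1 <= k)%nat /\ p = w_ eta k).

Definition convex_hull (S : C -> Prop) (x : C) : Prop :=
  exists l : list (R * C),
    List.Forall (fun p => 0 <= fst p /\ S (snd p)) l /\
    fold_right (fun p s => fst p + s) 0 l = 1 /\
    x = fold_right (fun p s => (RtoC (fst p) * snd p + s)%C) (RtoC 0) l.

Definition is_polygon (P : C -> Prop) : Prop :=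
  exists F : list C, forall x, P x <-> convex_hull (fun y => In y F) x.

(* Write a = ρ e^{-iη} with ρ = 1 / (2 cos η) < 1.  Both z_k = (c a) a^k and
   w_{k+1} = 1 - (c |a|^2 a) a^k are affine images p + q a^k of the powers of a.
   Some power a^m with m >= 2 lies in the triangle co{0, 1, a} (choose mη just
   above a multiple of 2π, with m large), so p + q a^(n+m) is a convex
   combination of p, p + q a^n and p + q a^(n+1).  Some powers a^n1, a^n2 lie in
   the open third and second quadrants, so 0 is in co{1, a^n1, a^n2} and p is a
   convex combination of three early terms.  By strong induction every point of
   V lies in the hull of b_0 and finitely many initial z_k and w_k. *)

From Stdlib Require Import Reals List Lra Lia Psatz ZArith Wf_nat.
From Coquelicot Require Import Coquelicot.
Open Scope R_scope.

Lemma C_ext (x y : C) : fst x = fst y -> snd x = snd y -> x = y.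
Proof. destruct x, y; simpl; intros; subst; auto. Qed.

(* [convex_hull T] is [nonneg_comb T 1]; arbitrary total weights [s] are
   needed to make the list inductions go through. *)
Definition nonneg_comb (T : C -> Prop) (s : R) (x : C) : Prop :=
  exists l : list (R * C),
    List.Forall (fun p => 0 <= fst p /\ T (snd p)) l /\
    fold_right (fun p s => fst p + s) 0 l = s /\
    x = fold_right (fun p s => (RtoC (fst p) * snd p + s)%C) (RtoC 0) l.

Lemma convex_hullE (T : C -> Prop) : convex_hull T = nonneg_comb T 1.
Proof. reflexivity. Qed.

Lemma nonneg_comb0 (T : C -> Prop) : nonneg_comb T 0 0.
Proof. exists nil; repeat split; constructor. Qed.

Lemma nonneg_comb_cons (T : C -> Prop) t y s x :
  0 <= t -> T y -> nonneg_comb T s x -> nonneg_comb T (t + s) (t * y + x)%C.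
Proof.
  intros Ht Hy (l & Hl & <- & ->).
  exists ((t, y) :: l); repeat split; auto.
Qed.

Lemma nonneg_comb_scale (T : C -> Prop) t s x :
  0 <= t -> nonneg_comb T s x -> nonneg_comb T (t * s) (t * x)%C.
Proof.
  intros Ht (l & Hl & <- & ->).
  induction Hl as [|[w y] l [Hw Hy] _ IH]; simpl.
  - rewrite Rmult_0_r, Cmult_0_r. apply nonneg_comb0.
  - rewrite Rmult_plus_distr_l, Cmult_plus_distr_l, Cmult_assoc, <- RtoC_mult.
    apply nonneg_comb_cons; auto. apply Rmult_le_pos; auto.
Qed.

Lemma nonneg_comb_of_hull (T : C -> Prop) t y :
  0 <= t -> convex_hull T y -> nonneg_comb T t (t * y)%C.
Proof.
  intros Ht Hy. rewrite <- (Rmult_1_r t) at 1. apply nonneg_comb_scale; auto.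
Qed.

Lemma nonneg_comb_add (T : C -> Prop) s s' x x' :
  nonneg_comb T s x -> nonneg_comb T s' x' -> nonneg_comb T (s + s') (x + x')%C.
Proof.
  intros (l & Hl & <- & ->) Hx'.
  induction Hl as [|[w y] l [Hw Hy] _ IH]; simpl.
  - rewrite Rplus_0_l, Cplus_0_l. exact Hx'.
  - rewrite Rplus_assoc, <- Cplus_assoc. apply nonneg_comb_cons; auto.
Qed.

Lemma nonneg_comb_hull_trans (S T : C -> Prop) s x :
  (forall y, S y -> convex_hull T y) -> nonneg_comb S s x -> nonneg_comb T s x.
Proof.
  intros HST (l & Hl & <- & ->).
  induction Hl as [|[w y] l [Hw Hy] _ IH]; simpl.
  - apply nonneg_comb0.
  - apply nonneg_comb_add; auto. apply nonneg_comb_of_hull; auto.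
Qed.

Lemma convex_hull_trans (S T : C -> Prop) x :
  (forall y, S y -> convex_hull T y) -> convex_hull S x -> convex_hull T x.
Proof. rewrite !convex_hullE. apply nonneg_comb_hull_trans. Qed.

Lemma convex_hull_point (T : C -> Prop) y : T y -> convex_hull T y.
Proof.
  intros Hy. rewrite convex_hullE, <- (Rplus_0_r 1), <- (Cplus_0_r y), <- (Cmult_1_l y).
  apply nonneg_comb_cons; auto using nonneg_comb0; lra.
Qed.

Definition convex_comb3 (y0 y1 y2 z : C) : Prop :=
  exists x0 x1 x2, 0 <= x0 /\ 0 <= x1 /\ 0 <= x2 /\ x0 + x1 + x2 = 1 /\
    z = (RtoC x0 * y0 + RtoC x1 * y1 + RtoC x2 * y2)%C.

Lemma convex_hull_comb3 (T : C -> Prop) y0 y1 y2 z :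
  convex_comb3 y0 y1 y2 z -> convex_hull T y0 -> convex_hull T y1 ->
  convex_hull T y2 -> convex_hull T z.
Proof.
  intros (x0 & x1 & x2 & H0 & H1 & H2 & Hs & ->) Hy0 Hy1 Hy2.
  rewrite convex_hullE, <- Hs.
  apply nonneg_comb_add; [apply nonneg_comb_add|]; apply nonneg_comb_of_hull; auto.
Qed.

Lemma is_polygon_convex_hull (S : C -> Prop) (F : list C) :
  (forall y, In y F -> S y) -> (forall y, S y -> convex_hull (fun y => In y F) y) ->
  is_polygon (convex_hull S).
Proof.
  intros HFS HSF. exists F. intros x. split; apply convex_hull_trans; auto.
  intros y Hy. apply convex_hull_point. auto.
Qed.

Lemma exists_mult_in_interval θ x :
  0 < θ -> 0 <= x -> exists n : nat, x < INR n * θ <= x + θ.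
Proof.
  intros Hθ Hx. destruct (archimed (x / θ)) as [Hup Hup'].
  assert (Hxθ : x / θ * θ = x) by (field; lra).
  assert (Hpos : 0 <= x / θ) by (apply Rdiv_le_0_compat; lra).
  exists (Z.to_nat (up (x / θ))).
  rewrite INR_IZR_INZ, Z2Nat.id by (apply le_IZR; lra).
  split; nra.
Qed.

Definition polarC (ρ θ : R) : C := (ρ * cos θ, ρ * sin θ).

Lemma Cpow_polarC ρ θ n : Cpow (polarC ρ θ) n = polarC (ρ ^ n) (INR n * θ).
Proof.
  induction n as [|n IH].
  - simpl. rewrite Rmult_0_l. unfold polarC. rewrite cos_0, sin_0. apply C_ext; simpl; ring.
  - rewrite Cpow_S, IH, S_INR. unfold polarC.
    replace ((INR n + 1) * θ) with (θ + INR n * θ) by ring.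
    apply C_ext; simpl; rewrite ?cos_plus, ?sin_plus; ring.
Qed.

(* Sine rule for the triangle 0, 1, e^{-iθ}: the unit vector e^{-it} is
   [sin (θ - t) + sin t e^{-iθ}] / sin θ. *)
Lemma polarC_decomp ρ' ρ θ t : sin θ <> 0 -> ρ <> 0 ->
  polarC ρ' (- t) = (RtoC (ρ' * sin (θ - t) / sin θ)
                     + RtoC (ρ' * sin t / (ρ * sin θ)) * polarC ρ (- θ))%C.
Proof.
  intros Hs Hρ. unfold polarC. rewrite !cos_neg, !sin_neg, sin_minus.
  apply C_ext; simpl; field; auto.
Qed.

Lemma polarC_shift ρ φ k : polarC ρ (φ - 2 * INR k * PI) = polarC ρ φ.
Proof.
  unfold polarC. rewrite <- (cos_period _ k), <- (sin_period _ k).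
  replace (φ - 2 * INR k * PI + 2 * INR k * PI) with φ by ring. reflexivity.
Qed.

Lemma origin_convex_comb (P Q : C) :
  fst P < 0 -> 0 < snd P -> fst Q < 0 -> snd Q < 0 -> convex_comb3 1 P Q 0.
Proof.
  destruct P as [p1 p2], Q as [q1 q2]; simpl; intros Hp1 Hp2 Hq1 Hq2.
  set (y0 := q2 * p1 - p2 * q1).
  assert (Hy0 : 0 < y0) by (unfold y0; nra).
  set (s := y0 - q2 + p2).
  assert (Hs : 0 < s) by (unfold s; lra).
  exists (y0 / s), (- q2 / s), (p2 / s).
  repeat split; try (apply Rdiv_le_0_compat; lra).
  - unfold s; field; lra.
  - apply C_ext; simpl; unfold y0; field; lra.
Qed.

Lemma Cpow_polarC_neg ρ θ n : Cpow (polarC ρ (- θ)) n = polarC (ρ ^ n) (- (INR n * θ)).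
Proof. rewrite Cpow_polarC. f_equal. ring. Qed.

Lemma pow_origin_convex_comb ρ θ : 0 < ρ -> 0 < θ < PI / 2 ->
  exists n1 n2, convex_comb3 1 (Cpow (polarC ρ (- θ)) n1) (Cpow (polarC ρ (- θ)) n2) 0.
Proof.
  intros Hρ Hθ. pose proof PI_RGT_0.
  destruct (exists_mult_in_interval θ PI) as [n1 Hn1]; try lra.
  destruct (exists_mult_in_interval θ (PI / 2)) as [n2 Hn2]; try lra.
  pose proof (pow_lt ρ n1 Hρ). pose proof (pow_lt ρ n2 Hρ).
  pose proof (cos_lt_0 (INR n1 * θ)). pose proof (sin_lt_0 (INR n1 * θ)).
  pose proof (cos_lt_0 (INR n2 * θ)). pose proof (sin_gt_0 (INR n2 * θ)).
  exists n1, n2.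
  apply origin_convex_comb; rewrite Cpow_polarC_neg; unfold polarC; simpl;
    rewrite ?cos_neg, ?sin_neg; nra.
Qed.

Lemma pow_in_triangle ρ θ : 0 < ρ < 1 -> 0 < θ < PI ->
  exists m, (2 <= m)%nat /\ convex_comb3 0 1 (polarC ρ (- θ)) (Cpow (polarC ρ (- θ)) m).
Proof.
  intros Hρ Hθ. pose proof PI_RGT_0.
  assert (Hsθ : 0 < sin θ) by (apply sin_gt_0; lra).
  destruct (pow_lt_1_zero ρ ltac:(rewrite Rabs_pos_eq; lra) (ρ * sin θ / 2))
    as [N HN]; [nra|].
  pose proof (pos_INR (S N)).
  destruct (exists_mult_in_interval θ (2 * INR (S N) * PI)) as [m [Hm Hm']];
    [lra | nra |].
  set (t := INR m * θ - 2 * INR (S N) * PI).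
  assert (Ht : 0 < t <= θ) by (unfold t; lra).
  assert (HmN : (2 * S N < m)%nat).
  { apply INR_lt. rewrite mult_INR. simpl (INR 2). nra. }
  specialize (HN m ltac:(lia)). rewrite Rabs_pos_eq in HN by (apply pow_le; lra).
  pose proof (pow_lt ρ m ltac:(lra)).
  assert (Hst : 0 < sin t) by (apply sin_gt_0; lra).
  assert (Hsθt : 0 <= sin (θ - t)) by (apply sin_ge_0; lra).
  pose proof (SIN_bound t). pose proof (SIN_bound (θ - t)).
  exists m. split; [lia|].
  set (al := ρ ^ m * sin (θ - t) / sin θ).
  set (be := ρ ^ m * sin t / (ρ * sin θ)).
  assert (Hal : 0 <= al /\ al < 1 / 2).
  { assert (al * sin θ = ρ ^ m * sin (θ - t)) by (unfold al; field; lra).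
    split; [apply Rdiv_le_0_compat|]; nra. }
  assert (Hbe : 0 <= be /\ be < 1 / 2).
  { assert (be * (ρ * sin θ) = ρ ^ m * sin t) by (unfold be; field; lra).
    split; [apply Rdiv_le_0_compat|]; nra. }
  exists (1 - al - be), al, be.
  repeat split; try lra.
  rewrite Cpow_polarC_neg, Cmult_0_r, Cplus_0_l, Cmult_1_r.
  replace (- (INR m * θ)) with (- t - 2 * INR (S N) * PI) by (unfold t; ring).
  rewrite polarC_shift. apply polarC_decomp; lra.
Qed.

Lemma convex_comb3_affine (p q y0 y1 y2 z : C) :
  convex_comb3 y0 y1 y2 z ->
  convex_comb3 (p + q * y0) (p + q * y1) (p + q * y2) (p + q * z).
Proof.
  intros (x0 & x1 & x2 & H0 & H1 & H2 & Hs & ->).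
  exists x0, x1, x2. repeat split; auto.
  rewrite <- (Cmult_1_l p) at 1. rewrite <- Hs, !RtoC_plus. ring.
Qed.

Section AffinePowers.

Variables (T : C -> Prop) (p q u : C).

Let f (k : nat) : C := (p + q * Cpow u k)%C.

Lemma affine_pow_base n1 n2 :
  convex_comb3 1 (Cpow u n1) (Cpow u n2) 0 -> convex_comb3 (f 0) (f n1) (f n2) p.
Proof.
  intros H. rewrite <- (Cplus_0_r p), <- (Cmult_0_r q) at 1.
  exact (convex_comb3_affine p q _ _ _ _ H).
Qed.

Lemma affine_pow_step m n :
  convex_comb3 0 1 u (Cpow u m) -> convex_comb3 p (f n) (f (S n)) (f (n + m)).
Proof.
  intros H. apply (convex_comb3_affine p (q * Cpow u n)) in H.
  replace (f n) with (p + q * Cpow u n * 1)%C by (unfold f; ring).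
  replace (f (S n)) with (p + q * Cpow u n * u)%C by (unfold f; rewrite Cpow_S; ring).
  replace (f (n + m)) with (p + q * Cpow u n * Cpow u m)%C
    by (unfold f; rewrite Cpow_add_r; ring).
  rewrite <- (Cplus_0_r p), <- (Cmult_0_r (q * Cpow u n)) at 1.
  exact H.
Qed.

(* [2 <= m] makes both [k - m] and [k - m + 1] smaller than [k]. *)
Lemma affine_pow_in_hull m n1 n2 K :
  (2 <= m)%nat -> (m <= K)%nat -> (n1 < K)%nat -> (n2 < K)%nat ->
  convex_comb3 0 1 u (Cpow u m) -> convex_comb3 1 (Cpow u n1) (Cpow u n2) 0 ->
  (forall k, (k < K)%nat -> convex_hull T (f k)) ->
  forall k, convex_hull T (f k).
Proof.
  intros Hm2 HmK Hn1 Hn2 Htri Horig Hinit.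
  assert (Hp : convex_hull T p).
  { apply (convex_hull_comb3 _ _ _ _ _ (affine_pow_base _ _ Horig)); apply Hinit; lia. }
  intros k. induction k as [k IH] using lt_wf_ind.
  destruct (Nat.lt_ge_cases k K) as [Hk | Hk]; [auto|].
  replace k with ((k - m) + m)%nat by lia.
  apply (convex_hull_comb3 _ _ _ _ _ (affine_pow_step _ _ Htri)); auto; apply IH; lia.
Qed.

End AffinePowers.

Lemma a_polarC eta : cos eta <> 0 -> a_ eta = polarC (/ (2 * cos eta)) (- eta).
Proof.
  intros Hc. unfold a_, polarC, Cdiv, Cmult, Cinv, RtoC. rewrite cos_neg, sin_neg.
  apply C_ext; simpl; field; auto.
Qed.

Lemma z_affine eta k : z_ eta k = (0 + (c_ eta * a_ eta) * Cpow (a_ eta) k)%C.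
Proof. unfold z_. rewrite Cpow_S. ring. Qed.

Lemma w_affine eta k :
  w_ eta (S k) = (1 + (- RtoC (c_ eta * Cmod (a_ eta) ^ 2) * a_ eta) * Cpow (a_ eta) k)%C.
Proof. unfold w_. rewrite Cpow_S. ring. Qed.

Theorem lemma3p1 (eta : R) (Heta : 0 < eta < PI / 3) :
  is_polygon (convex_hull (Vset eta)).
Proof.
  pose proof PI_RGT_0.
  assert (Hcos : 1 / 2 < cos eta) by (rewrite <- cos_PI3; apply cos_decreasing_1; lra).
  assert (Hρ : 0 < / (2 * cos eta) < 1).
  { split; [apply Rinv_0_lt_compat | rewrite <- Rinv_1; apply Rinv_lt_contravar]; lra. }
  destruct (pow_origin_convex_comb _ eta (proj1 Hρ)) as (n1 & n2 & Horig); [lra|].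
  destruct (pow_in_triangle _ eta Hρ) as (m & Hm2 & Htri); [lra|].
  rewrite <- a_polarC in Horig, Htri by lra.
  set (K := S (m + n1 + n2)).
  set (F := b_ eta 0 :: map (z_ eta) (seq 0 K) ++ map (w_ eta) (seq 1 K)).
  assert (Hpow : forall p q, (forall k, (k < K)%nat -> In (p + q * Cpow (a_ eta) k)%C F) ->
            forall k, convex_hull (fun y => In y F) (p + q * Cpow (a_ eta) k)%C).
  { intros p q Hin. apply (affine_pow_in_hull _ _ _ _ m n1 n2 K); try lia; auto.
    intros k Hk. apply convex_hull_point; auto. }
  apply (is_polygon_convex_hull _ F).
  - intros y [<- | Hy]; [now left | right].
    apply in_app_or in Hy as [Hy | Hy]; apply in_map_iff in Hy as (k & <- & Hk);
      apply in_seq in Hk; [left; now exists k | right; exists k; split; [lia | easy]].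
  - intros y [-> | [(k & ->) | ([|k] & Hk & ->)]]; [| | lia |].
    + apply convex_hull_point. now left.
    + rewrite z_affine. apply Hpow. intros j Hj. rewrite <- z_affine.
      right. apply in_or_app. left. apply in_map, in_seq. lia.
    + rewrite w_affine. apply Hpow. intros j Hj. rewrite <- w_affine.
      right. apply in_or_app. right. apply in_map, in_seq. lia.
Qed.
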